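(* Let $\zeta:\mathbb{R}\to\mathbb{R}$ be continuous and assume either (i) $\zeta$ is not a polynomial, or (ii) $\zeta$ is not affine and there exists $t\in\mathbb{R}$ at which $\zeta$ is continuously differentiable with $\zeta'(t)\neq 0$. Let $N, D$ be positive integers with $N\ge 2$, let $\mathcal{G}$ be the complete graph on $N$ nodes, let $\mathbf{W}\in\mathbb{R}^{D\times D}$, let $\tilde{\mathbf{A}} = \big(\mathbb{1}_{i\sim j \vee i=j}/\sqrt{\deg(v_i)\deg(v_j)}\big)_{i,j=1}^N$ and $\mathcal{L}^{\mathrm{conv}}_{\mathcal{G},\mathbf{W}}(\mathbf{X}) = \tilde{\mathbf{A}}\mathbf{X}\mathbf{W}$. Then the class of maps $f:\mathbb{R}^{N\times D}\to\mathbb{R}$ of the form $f = \mathrm{MLP}\circ\mathcal{L}^{\mathrm{conv}}_{\mathcal{G},\mathbf{W}}$, where $\mathrm{MLP}:\mathbb{R}^{N\times D}\to\mathbb{R}$ ranges over multilayer perceptrons with activation function $\zeta$, is not dense in $\mathcal{C}(\mathbb{R}^{N\times D},\mathbb{R})$ for the topology of uniform convergence on compact sets.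
   Context: $i\sim j$ means $v_i$ and $v_j$ are adjacent; degrees count the self-loop, so that for the complete graph every entry of $\tilde{\mathbf{A}}$ equals $1/N$. MLPs take the matrix input (viewed as a vector in $\mathbb{R}^{ND}$) to a real number. *)

From HB Require Import structures.
From mathcomp Require Import all_boot all_order all_algebra.
From mathcomp Require Import all_classical all_reals all_analysis.
Set Implicit Arguments. Unset Strict Implicit. Unset Printing Implicit Defensive.
Import Order.TTheory GRing.Theory Num.Theory.
Import numFieldNormedType.Exports.
Local Open Scope ring_scope.

Definition complete_adj (N : nat) (i j : 'I_N) : bool := i != j.

Definition deg_sl (N : nat) (adj : 'I_N -> 'I_N -> bool) (i : 'I_N) : nat :=
  #|[set j : 'I_N | adj i j || (i == j)]|.

Definition Atilde (R : rcfType) (N : nat) (adj : 'I_N -> 'I_N -> bool) : 'M[R]_N :=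
  \matrix_(i, j) ((adj i j || (i == j))%:R
                  / Num.sqrt ((deg_sl adj i)%:R * (deg_sl adj j)%:R)).

Definition conv_layer (R : rcfType) (N D : nat) (adj : 'I_N -> 'I_N -> bool)
  (W : 'M[R]_D) (X : 'M[R]_(N, D)) : 'M[R]_(N, D) :=
  Atilde R adj *m X *m W.

(* Multilayer perceptrons with input width n and scalar output:
   a (possibly empty) list of hidden affine layers, each followed by the
   componentwise activation, then a final affine map to R. *)
Inductive mlp (R : Type) : nat -> Type :=
| mlp_out (n : nat) (a : 'cV[R]_n) (c : R) : mlp R n
| mlp_hidden (n m : nat) (A : 'M[R]_(n, m)) (b : 'rV[R]_m) (rest : mlp R m) : mlp R n.

Fixpoint mlp_eval (R : nzRingType) (zeta : R -> R) (n : nat) (net : mlp R n)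
  : 'rV[R]_n -> R :=
  match net in mlp _ n return 'rV[R]_n -> R with
  | mlp_out n a c => fun x => (x *m a) ord0 ord0 + c
  | mlp_hidden n m A b rest => fun x => mlp_eval zeta rest (map_mx zeta (x *m A + b))
  end.

Definition mlp_fun (R : nzRingType) (zeta : R -> R) (N D : nat)
  (net : mlp R (N * D)) (X : 'M[R]_(N, D)) : R :=
  mlp_eval zeta net (mxvec X).

Definition is_polynomial_fun (R : nzRingType) (f : R -> R) : Prop :=
  exists p : {poly R}, forall x, f x = p.[x].

Definition is_affine_fun (R : nzRingType) (f : R -> R) : Prop :=
  exists a b : R, forall x, f x = a * x + b.

Definition C1_at (R : realType) (f : R -> R) (t : R) : Prop :=
  (\forall x \near t, derivable f x 1) /\ {for t, continuous (derive1 f)}.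

(* On the complete graph every node has degree N (counting its self-loop), so
   Atilde is the constant matrix 1/N and Atilde X only sees the column sums of X.
   Hence the convolution layer identifies the two matrices carrying a single 1
   in the first column at rows 0 and 1, and so does every MLP composed with it,
   while the continuous coordinate function X |-> X 0 0 tells them apart: on
   that two-point compact set no member of the class comes within 1/2 of it. *)

From HB Require Import structures.
From mathcomp Require Import all_boot all_order all_algebra.
From mathcomp Require Import all_classical all_reals all_analysis.
Import Order.TTheory GRing.Theory Num.Theory.
Import numFieldNormedType.Exports.
Local Open Scope classical_set_scope.
Local Open Scope ring_scope.

Lemma deg_sl_complete (N : nat) (i : 'I_N) : deg_sl (@complete_adj N) i = N.
Proof.
rewrite /deg_sl /complete_adj -[RHS](card_ord N).
by apply: eq_card => j; rewrite !inE orNb.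
Qed.

Lemma Atilde_complete (R : rcfType) (N : nat) :
  Atilde R (@complete_adj N) = const_mx N%:R^-1.
Proof.
apply/matrixP => i j; rewrite !mxE /complete_adj orNb !deg_sl_complete.
by rewrite -expr2 sqrtr_sqr ger0_norm ?mul1r.
Qed.

Lemma const_mx_mul_delta (R : pzSemiRingType) (m n p : nat) (c : R)
    (i j : 'I_n) (k : 'I_p) :
  const_mx c *m delta_mx i k = const_mx c *m delta_mx j k :> 'M[R]_(m, p).
Proof.
have delta_rowE (l : 'I_n) :
    const_mx c *m delta_mx l k = \matrix_(a < m, q < p) (c * (q == k)%:R).
  apply/matrixP => a q; rewrite !mxE (bigD1 l) //= big1 ?addr0.
    by rewrite !mxE eqxx.
  by move=> l' /negbTE l'l; rewrite !mxE l'l mulr0.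
by rewrite !delta_rowE.
Qed.

Lemma conv_layer_complete_delta {R : rcfType} {N D : nat} (W : 'M[R]_D)
    (i j : 'I_N) (k : 'I_D) :
  conv_layer (@complete_adj N) W (delta_mx i k) =
  conv_layer (@complete_adj N) W (delta_mx j k).
Proof.
by rewrite /conv_layer Atilde_complete; congr (_ *m _); apply: const_mx_mul_delta.
Qed.

Lemma half_dist_le_dist {R : realFieldType} (u a b : R) :
  `|a - b| / 2 <= `|u - a| \/ `|a - b| / 2 <= `|u - b|.
Proof.
have tri : `|a - b| <= `|u - a| + `|u - b|.
  by rewrite -(subrKA u) distrC (le_trans (ler_normD _ _)) // distrC.
have [le_a|lt_a] := leP (`|a - b| / 2) `|u - a|; [by left | right].
rewrite -lerBlDl in tri; apply: le_trans tri.
by rewrite lerBrDl -lerBrDr {1}(splitr `|a - b|) addrK ltW.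
Qed.

Lemma far_on_pair {R : realFieldType} {T : Type} (f g : T -> R) {x0 x1 : T} :
  f x0 = f x1 ->
  exists2 x, x = x0 \/ x = x1 & `|g x0 - g x1| / 2 <= `|f x - g x|.
Proof.
move=> f01; have [near0|near1] := half_dist_le_dist (f x0) (g x0) (g x1).
  by exists x0; [left |].
by exists x1; [right | rewrite -f01].
Qed.

Theorem lemma2 (R : realType) (zeta : R -> R) (N D : nat) (W : 'M[R]_D) :
  continuous zeta ->
  (~ is_polynomial_fun zeta \/
   (~ is_affine_fun zeta /\ exists t : R, C1_at zeta t /\ derive1 zeta t != 0)) ->
  (2 <= N)%N -> (0 < D)%N ->
  (* the class { MLP o L^conv_{G,W} } is not dense in C(R^{N x D}, R) for the
     compact-open topology: some continuous g, compact K and eps > 0 such that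
     every member of the class is eps-far from g somewhere on K *)
  exists g : 'M[R]_(N, D) -> R, continuous g /\
  exists K : set 'M[R]_(N, D), compact K /\
  exists eps : R, 0 < eps /\
  forall net : mlp R (N * D),
  exists X : 'M[R]_(N, D), K X /\
    eps <= `| mlp_fun zeta net (conv_layer (@complete_adj N) W X) - g X |.
Proof.
move=> _ _ N_ge2 D_gt0.
pose i0 : 'I_N := Ordinal (ltn_trans (ltnSn 0) N_ge2).
pose i1 : 'I_N := Ordinal N_ge2.
pose k0 : 'I_D := Ordinal D_gt0.
pose X0 : 'M[R]_(N, D) := delta_mx i0 k0.
pose X1 : 'M[R]_(N, D) := delta_mx i1 k0.
exists (fun X => X i0 k0); split; first exact: coord_continuous.
exists ([set X0] `|` [set X1]); split; first exact/compactU/compact_set1/compact_set1.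
exists (1 / 2); split; first by rewrite divr_gt0.
move=> net.
pose f X := mlp_fun zeta net (conv_layer (@complete_adj N) W X).
have same_output : f X0 = f X1.
  by rewrite /f /X0 /X1 (conv_layer_complete_delta W i0 i1).
have [X X01 far] := far_on_pair f (fun X : 'M[R]_(N, D) => X i0 k0) same_output.
exists X; split; first by case: X01 => ->; [left | right].
have X0_coord : X0 i0 k0 = 1 by rewrite mxE !eqxx.
have X1_coord : X1 i0 k0 = 0 by rewrite mxE (_ : i0 == i1 = false).
by apply: le_trans far; rewrite X0_coord X1_coord subr0 normr1.
Qed.
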